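(* Let $f:X\to\mathcal G$ be a convex function, $x\in\operatorname{dom} f$ and $u\in X$. Then $$f'(x,u)=\operatorname{cl}\operatorname{co}\bigcup_{t>0}\tfrac1t\big(f(x+tu)\ominus f(x)\big),$$ $f'(x,0)=0^+f(x)$, and the function $u\mapsto f'(x,u)$ is sublinear as a function from $X$ to $\mathcal G(Z,0^+f(x))$; that is, $f'(x,su)=sf'(x,u)$ for all $s>0$, $u\in X$, and $f'(x,su_1+(1-s)u_2)\supseteq sf'(x,u_1)\oplus(1-s)f'(x,u_2)$ for all $u_1,u_2\in X$, $s\in(0,1)$.
   Context: $X$ is a real linear space, $Z$ a real locally convex Hausdorff space, $C\subseteq Z$ a closed convex cone with $0\in C$ and $C^-=\{z^*\in Z^*:z^*(c)\le0\ \forall c\in C\}\ne\{0\}$. For a closed convex cone $K$ with $0\in K$, $\mathcal G(Z,K)=\{A\subseteq Z: A=\operatorname{cl}\operatorname{co}(A+K)\}$; $\mathcal G=\mathcal G(Z,C)$. $A\oplus B=\operatorname{cl}\{a+b\}$, $tA=\{ta\}$ for $t>0$, $A\ominus B=\{z: B+\{z\}\subseteq A\}$. $0^+A=\{z: A+\{z\}\subseteq A\}$ for $A\neq\emptyset$. $f$ convex: $f(tx_1+(1-t)x_2)\supseteq tf(x_1)\oplus(1-t)f(x_2)$; $\operatorname{dom}f=\{x: f(x)\ne\emptyset\}$. $f'(x,u)=\bigcap_{t_0>0}\operatorname{cl}\operatorname{co}\bigcup_{0<t<t_0}\frac1t\big(f(x+tu)\ominus f(x)\big)$. *)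

From HB Require Import structures.
From mathcomp Require Import all_boot all_order all_algebra.
From mathcomp Require Import all_classical all_reals all_analysis.
Set Implicit Arguments.
Unset Strict Implicit.
Unset Printing Implicit Defensive.
Import Order.TTheory GRing.Theory Num.Theory.
Local Open Scope classical_set_scope.
Local Open Scope ring_scope.

Section SetValued.
Context {R : realType}.

Definition convexS {V : lmodType R} (A : set V) : Prop :=
  forall a b t, A a -> A b -> 0 <= t -> t <= 1 -> A (t *: a + (1 - t) *: b).

Definition co {V : lmodType R} (A : set V) : set V :=
  \bigcap_(B in [set B : set V | convexS B /\ A `<=` B]) B.

Definition closed_convex_cone {Z : tvsType R} (K : set Z) : Prop :=
  closed K /\ convexS K /\ K 0 /\ (forall t c, 0 < t -> K c -> K (t *: c)).

(* C^- <> {0}: some nonzero continuous linear functional is <= 0 on C *)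
Definition negdual_nontrivial {Z : tvsType R} (C : set Z) : Prop :=
  exists zs : Z -> R,
    (forall a b, zs (a + b) = zs a + zs b) /\
    (forall (t : R) a, zs (t *: a) = t * zs a) /\
    (forall (z : Z) (e : R), 0 < e -> \forall y \near z, `|zs y - zs z| < e) /\
    (forall c, C c -> zs c <= 0) /\
    (exists z, zs z != 0).

Definition msum {V : lmodType R} (A B : set V) : set V :=
  [set z | exists a b, A a /\ B b /\ z = a + b].

Definition oplus {Z : tvsType R} (A B : set Z) : set Z := closure (msum A B).

Definition sscale {V : lmodType R} (t : R) (A : set V) : set V :=
  [set t *: a | a in A].

Definition ominus {V : lmodType R} (A B : set V) : set V :=
  [set z | forall b, B b -> A (b + z)].

Definition recc {V : lmodType R} (A : set V) : set V :=
  [set z | forall a, A a -> A (a + z)].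

Definition inG {Z : tvsType R} (K : set Z) (A : set Z) : Prop :=
  A = closure (co (msum A K)).

Definition convex_setfun {X : lmodType R} {Z : tvsType R} (f : X -> set Z) : Prop :=
  forall x1 x2 (t : R), 0 < t -> t < 1 ->
    oplus (sscale t (f x1)) (sscale (1 - t) (f x2)) `<=` f (t *: x1 + (1 - t) *: x2).

Definition dom {X : lmodType R} {Z : tvsType R} (f : X -> set Z) : set X :=
  [set x | f x != set0].

Definition dirder {X : lmodType R} {Z : tvsType R} (f : X -> set Z) (x u : X) : set Z :=
  \bigcap_(t0 in [set t0 : R | 0 < t0])
    closure (co (\bigcup_(t in [set t : R | 0 < t < t0])
                   sscale t^-1 (ominus (f (x + t *: u)) (f x)))).

End SetValued.

From HB Require Import structures.
From mathcomp Require Import all_boot all_order all_algebra.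
From mathcomp Require Import all_classical all_reals all_analysis.
Import Order.TTheory GRing.Theory Num.Theory.
Local Open Scope classical_set_scope.
Local Open Scope ring_scope.

(* By convexity of f, the difference quotients
   Q(t) = t^-1 (f(x + t u) (-) f(x)) grow as t decreases to 0, so the union of
   the Q(t) over 0 < t < t0 does not depend on t0; this gives the first formula.
   Rescaling t shows f'(x, s u) = s f'(x, u).  Given two quotients at t1 and t2,
   monotonicity moves both to t = min t1 t2, where convexity of f combines them.
   Finally Q(t) + 0^+f(x) = Q(t) because the recession cone of the closed convex
   set f(x) is a cone, and for u = 0 every Q(t) is t^-1 0^+f(x). *)

Section ConvexHull.
Context {R : realType} {V : lmodType R}.

Lemma combvv (l : R) (v : V) : l *: v + (1 - l) *: v = v.
Proof. by rewrite -scalerDl (addrC l) subrK scale1r. Qed.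

Lemma subset_co (A : set V) : A `<=` co A.
Proof. by move=> a Aa B [_ AB]; exact: AB. Qed.

Lemma convex_co (A : set V) : convexS (co A).
Proof.
move=> a b t ha hb t0 t1 B [cB AB].
by apply: (cB) => //; [exact: ha | exact: hb].
Qed.

Lemma co_sub (A B : set V) : convexS B -> A `<=` B -> co A `<=` B.
Proof. by move=> cB AB y; apply. Qed.

Lemma convex_affine_preimage (A : set V) (c : R) (w : V) :
  convexS A -> convexS (fun v => A (c *: v + w)).
Proof.
move=> cA v1 v2 t h1 h2 t0 t1.
have -> : c *: (t *: v1 + (1 - t) *: v2) + w =
    t *: (c *: v1 + w) + (1 - t) *: (c *: v2 + w).
  by rewrite !scalerDr !scalerA addrACA combvv (mulrC t c) (mulrC (1 - t) c).
exact: cA.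
Qed.

(* One argument at a time: fixing one point, the other ranges over the convex
   affine preimage of [co S]. *)
Lemma co_comb2 (a b : R) (A B S : set V) :
  (forall v w, A v -> B w -> S (a *: v + b *: w)) ->
  forall v w, co A v -> co B w -> co S (a *: v + b *: w).
Proof.
move=> hS.
have coA_comb w : B w -> forall v, co A v -> co S (a *: v + b *: w).
  move=> Bw; apply: co_sub; first by apply: convex_affine_preimage; exact: convex_co.
  by move=> v Av; apply: subset_co; exact: hS.
move=> v w cv cw; rewrite addrC; move: w cw; apply: co_sub.
  by apply: convex_affine_preimage; exact: convex_co.
by move=> w' Bw' /=; rewrite addrC; exact: coA_comb.
Qed.

End ConvexHull.

Section RecessionCone.
Context {R : realType} {V : lmodType R}.
Variable A : set V.

Lemma recc0 : recc A 0.
Proof. by move=> a Aa; rewrite addr0. Qed.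

Lemma convex_recc : convexS A -> convexS (recc A).
Proof.
move=> cA z1 z2 t h1 h2 t0 t1 a Aa.
rewrite -{1}(combvv t a) addrACA -!scalerDr.
by apply: cA => //; [exact: h1 | exact: h2].
Qed.

Lemma recc_natmul z n : recc A z -> recc A (n%:R *: z).
Proof.
move=> hz; elim: n => [|n IH] a Aa; first by rewrite scale0r addr0.
by rewrite -addn1 natrD scalerDl scale1r addrA; apply: hz; exact: IH.
Qed.

(* [t z] is a convex combination of [0] and [n z] for an integer [n > t]. *)
Lemma recc_scale z (t : R) : convexS A -> 0 < t -> recc A z -> recc A (t *: z).
Proof.
move=> cA tp hz.
have hn := archi_boundP (ltW tp); set n := Num.bound t in hn.
have np : 0 < (n%:R : R) by exact: lt_trans hn.
have l0 : 0 <= t / n%:R by rewrite divr_ge0 // ltW.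
have l1 : t / n%:R <= 1 by rewrite ler_pdivrMr // mul1r ltW.
have := convex_recc cA _ _ _ (recc_natmul z n hz) recc0 l0 l1.
by rewrite scaler0 addr0 scalerA divfK // gt_eqF.
Qed.

End RecessionCone.

Section ClosedConvexHull.
Context {R : realType} {Z : tvsType R}.

Lemma closure_comb2 {a b : R} {A B S : set Z} {p q : Z} :
  closure A p -> closure B q ->
  (forall v w, A v -> B w -> S (a *: v + b *: w)) -> closure S (a *: p + b *: q).
Proof.
move=> hp hq hS N hN.
have comb_cont : {for (p, q), continuous (fun z : Z * Z => a *: z.1 + b *: z.2)}.
  apply: (cvg_comp2 _ _ (add_continuous (_, _))).
    exact: (cvg_comp2 (cvg_cst (a : R^o)) cvg_fst (scale_continuous (_, _))).
  exact: (cvg_comp2 (cvg_cst (b : R^o)) cvg_snd (scale_continuous (_, _))).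
have [[U W] /= [hU hW] sub] := comb_cont N hN.
have [v [Av Uv]] := hp _ hU.
have [w [Bw Ww]] := hq _ hW.
by exists (a *: v + b *: w); split; [exact: hS | exact: (sub (v, w))].
Qed.

Lemma convex_closure (A : set Z) : convexS A -> convexS (closure A).
Proof.
move=> cA p q t hp hq t0 t1.
by apply: (closure_comb2 hp hq) => v w Av Aw; exact: cA.
Qed.

Lemma convex_clco (A : set Z) : convexS (closure (co A)).
Proof. by apply: convex_closure; exact: convex_co. Qed.

Lemma subset_clco (A : set Z) : A `<=` closure (co A).
Proof. by move=> a Aa; apply: subset_closure; exact: subset_co. Qed.

Lemma clco_sub (A B : set Z) :
  closed B -> convexS B -> A `<=` B -> closure (co A) `<=` B.
Proof. by move=> clB cB AB y hy; apply: clB; apply: (closureS _ hy); exact: co_sub. Qed.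

Lemma clco_comb2 {a b : R} {A B S : set Z} {p q : Z} :
  (forall v w, A v -> B w -> S (a *: v + b *: w)) ->
  closure (co A) p -> closure (co B) q -> closure (co S) (a *: p + b *: q).
Proof. by move=> hS hp hq; apply: (closure_comb2 hp hq); exact: co_comb2. Qed.

Lemma clco_scale {a : R} {A S : set Z} {p : Z} :
  (forall v, A v -> S (a *: v)) -> closure (co A) p -> closure (co S) (a *: p).
Proof.
move=> hS hp; rewrite -[a *: p]addr0 -(scale0r (0 : Z)).
apply: (clco_comb2 _ hp (subset_clco [set 0] 0 (erefl 0))) => v w Av _.
by rewrite scale0r addr0; exact: hS.
Qed.

Lemma clco_sscale (s : R) (A : set Z) : s != 0 ->
  closure (co (sscale s A)) = sscale s (closure (co A)).
Proof.
move=> s0; apply/seteqP; split => [w hw|_ [v hv <-]].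
  exists (s^-1 *: w); last by rewrite scalerA divff ?scale1r.
  apply: (clco_scale _ hw) => _ [v Av <-].
  by rewrite scalerA mulVf ?scale1r.
by apply: (clco_scale _ hv) => y Ay; exists y.
Qed.

Lemma inG_closed {K A : set Z} : inG K A -> closed A.
Proof. by move->; exact: closed_closure. Qed.

Lemma inG_convex {K A : set Z} : inG K A -> convexS A.
Proof. by move->; exact: convex_clco. Qed.

Lemma closed_recc (A : set Z) : closed A -> closed (recc A).
Proof.
move=> clA z hz a Aa; apply: clA.
have ha : closure [set a] a by exact: subset_closure.
rewrite -(scale1r a) -(scale1r z).
apply: (closure_comb2 ha hz) => _ w -> rw.
by rewrite !scale1r; exact: rw.
Qed.

End ClosedConvexHull.

Section DirectionalDerivative.
Context {R : realType} {X : lmodType R} {Z : tvsType R}.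
Variables (f : X -> set Z) (x : X).
Hypothesis fconvex : convex_setfun f.

Definition diffq (u : X) (t : R) : set Z :=
  sscale t^-1 (ominus (f (x + t *: u)) (f x)).

Lemma diffq0 t : diffq 0 t = sscale t^-1 (recc (f x)).
Proof. by rewrite /diffq scaler0 addr0. Qed.

(* [x + s u] is the convex combination of [x + t u] and [x] with weight [s / t]. *)
Lemma diffq_sub u (s t : R) : 0 < s -> s <= t -> diffq u t `<=` diffq u s.
Proof.
move=> s0; rewrite le_eqVlt => /predU1P[<- //|st] _ [z hz <-].
have t0 : 0 < t by exact: lt_trans st.
have l0 : 0 < s / t by rewrite divr_gt0.
have l1 : s / t < 1 by rewrite ltr_pdivrMr // mul1r.
exists ((s / t) *: z); last by rewrite scalerA mulrA mulVf ?mul1r // gt_eqF.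
move=> b fb; have := fconvex (x + t *: u) x (s / t) l0 l1.
rewrite scalerDr scalerA divfK ?gt_eqF // addrAC combvv; apply.
apply: subset_closure; exists ((s / t) *: (b + z)), ((1 - s / t) *: b).
split; first by exists (b + z) => //; exact: hz.
by split; [exists b | rewrite scalerDr addrAC combvv].
Qed.

Lemma bigcup_diffq_small u (t0 : R) : 0 < t0 ->
  \bigcup_(t in [set t : R | 0 < t < t0]) diffq u t =
  \bigcup_(t in [set t : R | 0 < t]) diffq u t.
Proof.
move=> t0p; apply/seteqP; split => [w [t /andP[tp _] hw]|w [t /= tp hw]].
  by exists t.
have [tt0|t0t] := ltP t t0; first by exists t => //=; rewrite tp tt0.
have h2 : 0 < t0 / 2 by rewrite divr_gt0.
exists (t0 / 2); first by rewrite /= h2 ltr_pdivrMr // ltr_pMr // ltr1n.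
apply: (diffq_sub u (t0 / 2) t h2 _ w hw); apply: le_trans t0t.
by rewrite ler_pdivrMr // ler_pMr // ler1n.
Qed.

Lemma dirder_clco_diffq u :
  dirder f x u = closure (co (\bigcup_(t in [set t : R | 0 < t]) diffq u t)).
Proof.
apply/seteqP; split => [w hw|w hw t0 t0p].
  by have := hw 1 ltr01; rewrite /= (bigcup_diffq_small u 1 ltr01).
by rewrite /= (bigcup_diffq_small u t0 t0p).
Qed.

Lemma bigcup_diffqZ (s : R) u : 0 < s ->
  \bigcup_(t in [set t : R | 0 < t]) diffq (s *: u) t =
  sscale s (\bigcup_(t in [set t : R | 0 < t]) diffq u t).
Proof.
move=> sp; apply/seteqP; split => [w [t /= tp [z hz <-]]|_ [_ [t /= tp [z hz <-]] <-]].
  exists ((t * s)^-1 *: z).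
    by exists (t * s); [rewrite /= mulr_gt0 | exists z => //; rewrite -scalerA].
  by rewrite scalerA invfM mulrCA mulfV ?mulr1 // gt_eqF.
exists (t / s); first by rewrite /= divr_gt0.
by exists z; rewrite scalerA ?divfK ?invf_div // gt_eqF.
Qed.

Lemma dirderZ (s : R) u : 0 < s -> dirder f x (s *: u) = sscale s (dirder f x u).
Proof.
move=> sp; rewrite !dirder_clco_diffq bigcup_diffqZ //.
by rewrite clco_sscale // gt_eqF.
Qed.

Lemma diffq_comb (s t : R) u1 u2 z1 z2 : 0 < s -> s < 1 ->
  diffq u1 t z1 -> diffq u2 t z2 ->
  diffq (s *: u1 + (1 - s) *: u2) t (s *: z1 + (1 - s) *: z2).
Proof.
move=> s0 s1 [y1 hy1 <-] [y2 hy2 <-].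
exists (s *: y1 + (1 - s) *: y2); last first.
  by rewrite scalerDr !scalerA (mulrC s) (mulrC (1 - s)).
move=> b fb.
have <- : s *: (x + t *: u1) + (1 - s) *: (x + t *: u2) =
          x + t *: (s *: u1 + (1 - s) *: u2).
  by rewrite !scalerDr addrACA combvv !scalerA (mulrC s t) (mulrC (1 - s) t).
apply: (fconvex _ _ s s0 s1); apply: subset_closure.
exists (s *: (b + y1)), ((1 - s) *: (b + y2)).
split; first by exists (b + y1) => //; exact: hy1.
by split; [exists (b + y2) => //; exact: hy2 | rewrite !scalerDr addrACA combvv].
Qed.

Lemma dirder_convex (s : R) u1 u2 : 0 < s -> s < 1 ->
  oplus (sscale s (dirder f x u1)) (sscale (1 - s) (dirder f x u2))
    `<=` dirder f x (s *: u1 + (1 - s) *: u2).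
Proof.
move=> s0 s1; rewrite !dirder_clco_diffq => w hw.
apply: closed_closure; apply: (closureS _ hw) => _ [_ [_ [[d1 hd1 <-] [[d2 hd2 <-] ->]]]].
apply: (clco_comb2 _ hd1 hd2) => v1 v2 [t1 t1p hv1] [t2 t2p hv2].
have tp : 0 < Order.min t1 t2 by rewrite lt_min t1p t2p.
have le1 : Order.min t1 t2 <= t1 by rewrite ge_min lexx.
have le2 : Order.min t1 t2 <= t2 by rewrite ge_min lexx orbT.
exists (Order.min t1 t2) => //; apply: diffq_comb => //.
  exact: (diffq_sub u1 _ t1 tp le1 v1 hv1).
exact: (diffq_sub u2 _ t2 tp le2 v2 hv2).
Qed.

Section ClosedConvexValue.
Hypotheses (fx_closed : closed (f x)) (fx_convex : convexS (f x)).

Lemma dirder0 : dirder f x 0 = recc (f x).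
Proof.
rewrite dirder_clco_diffq; apply/seteqP; split.
  apply: clco_sub; [exact: closed_recc | exact: convex_recc |].
  move=> w [t /= tp]; rewrite diffq0 => -[z hz <-].
  by apply: recc_scale => //; rewrite invr_gt0.
move=> w hw; apply: subset_clco; exists 1; first exact: ltr01.
by rewrite diffq0; exists w; rewrite ?invr1 ?scale1r.
Qed.

(* [t^-1 (z + t r) = t^-1 z + r], and [t r] is again a recession direction. *)
Lemma diffqD_recc u t z r : 0 < t -> diffq u t z -> recc (f x) r -> diffq u t (z + r).
Proof.
move=> tp [y hy <-] hr; exists (y + t *: r).
  move=> b fb; rewrite [y + _]addrC addrA; apply: hy.
  exact: (recc_scale (f x) r t fx_convex tp hr b fb).
by rewrite scalerDr scalerA mulVf ?scale1r // gt_eqF.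
Qed.

Lemma inG_dirder u : inG (recc (f x)) (dirder f x u).
Proof.
rewrite /inG dirder_clco_diffq; apply/seteqP; split => [d hd|].
  apply: subset_clco; exists d, 0.
  by rewrite addr0; split => //; split => //; exact: recc0.
apply: clco_sub; [exact: closed_closure | exact: convex_clco |].
move=> _ [d [r [hd [hr ->]]]]; rewrite -(scale1r d) -(scale1r r).
apply: (clco_comb2 _ hd (subset_clco [set r] r erefl)) => z _ [t tp hz] ->.
by rewrite !scale1r; exists t => //; exact: diffqD_recc.
Qed.

End ClosedConvexValue.

End DirectionalDerivative.

Theorem mainTheorem8 (R : realType) (X : lmodType R) (Z : tvsType R)
  (hZ : hausdorff_space Z) (C : set Z)
  (hC : closed_convex_cone C) (hCd : negdual_nontrivial C)
  (f : X -> set Z) (hfG : forall x, inG C (f x)) (hfc : convex_setfun f)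
  (x : X) (hx : dom f x) (u : X) :
  dirder f x u =
    closure (co (\bigcup_(t in [set t : R | 0 < t])
                   sscale t^-1 (ominus (f (x + t *: u)) (f x)))) /\
  dirder f x 0 = recc (f x) /\
  (forall v, inG (recc (f x)) (dirder f x v)) /\
  (forall (s : R) v, 0 < s -> dirder f x (s *: v) = sscale s (dirder f x v)) /\
  (forall (s : R) u1 u2, 0 < s -> s < 1 ->
     oplus (sscale s (dirder f x u1)) (sscale (1 - s) (dirder f x u2))
       `<=` dirder f x (s *: u1 + (1 - s) *: u2)).
Proof.
have fx_closed := inG_closed (hfG x).
have fx_convex := inG_convex (hfG x).
split; first exact: dirder_clco_diffq.
split; first exact: dirder0.
split; first by move=> v; exact: inG_dirder.
split; first by move=> s v; exact: dirderZ.
by move=> s u1 u2; exact: dirder_convex.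
Qed.
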